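(* Let $1\le d\le r$ and $0\le k\le r-1$ be integers. Then: (i) All entries of $g^{r,d}_k$ are non-negative, and $\mathrm{last}(g^{r,d}_k)=0$ if and only if either ($d$ is even, $d=r$ and $k=0$) or ($d=1$ and $k>0$). (ii) If $d$ is odd, then $\mathrm{last}(\hat g^{r,d}_k)>0$ for $k\ge d/2$ and $\mathrm{last}(\hat g^{r,d}_k)<0$ for $k<d/2$. (iii) If $d$ is even, then $\mathrm{last}(\hat g^{r,d}_k)>0$ for $k>\frac{d+r}{2}$ and $\mathrm{last}(\hat g^{r,d}_k)<0$ for $k<\frac{d+r}{2}$; moreover, if $r$ is even, then $\mathrm{last}(\hat g^{r,d}_{(d+r)/2})=0$.
   Context: For integers $r\ge0$, $d\ge1$ and $i\in\mathbb Z$, $C(r,d,i)$ denotes the number of integer vectors $(u_1,\dots,u_d)$ with $u_1+\cdots+u_d=i$ and $0\le u_l\le r$ for all $l$. For integers $d\ge1$, $r\ge1$, $k\ge0$: if $0\le k\le r-1$, let $\hat g^{r,d}_k=(g_0,g_1,\dots,g_{\lfloor d/2\rfloor+1})\in\mathbb Z^{\lfloor d/2\rfloor+2}$ with $g_0=C(r-1,d,-k)=\delta_{0,k}$ and $g_i=C(r-1,d,ir-k)-C(r-1,d,(i-1)r-k)$ for $1\le i\le\lfloor d/2\rfloor+1$; if $k\ge r$, $\hat g^{r,d}_k$ is the zero vector. The vector $g^{r,d}_k\in\mathbb Z^{\lfloor d/2\rfloor+1}$ is obtained from $\hat g^{r,d}_k$ by deleting its last entry. For a vector $v$, $\mathrm{last}(v)$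 denotes its rightmost entry. *)

From HB Require Import structures.
From mathcomp Require Import all_boot all_order all_algebra.
Set Implicit Arguments. Unset Strict Implicit. Unset Printing Implicit Defensive.
Import Order.TTheory GRing.Theory Num.Theory.
Local Open Scope ring_scope.

Definition Ccount (r d : nat) (i : int) : nat :=
  #|[set u : {ffun 'I_d -> 'I_r.+1} | ((\sum_(l < d) (u l : nat))%N)%:Z == i]|.

Definition ghat_entry (r d k i : nat) : int :=
  if i is i'.+1 then
    (Ccount r.-1 d ((i * r)%N%:Z - k%:Z))%:Z
    - (Ccount r.-1 d ((i' * r)%N%:Z - k%:Z))%:Z
  else (Ccount r.-1 d (- k%:Z))%:Z.

Definition ghat (r d k : nat) : seq int :=
  if (k < r)%N then [seq ghat_entry r d k i | i <- iota 0 (d./2 + 2)]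
  else nseq (d./2 + 2) 0.

Definition gvec (r d k : nat) : seq int := take (d./2 + 1) (ghat r d k).

Definition lastv (v : seq int) : int := last 0 v.

From HB Require Import structures.
From mathcomp Require Import all_boot all_order all_algebra.
From mathcomp Require Import zify.
Import Order.TTheory GRing.Theory Num.Theory.
Local Open Scope ring_scope.

(* Write c_n(x) = C(s, n, x) for the number of vectors in [0, s]^n with sum x;
   it is the coefficient of X^x in B_s^n, where B_s = 1 + X + ... + X^s.
   1. c_n vanishes on negative arguments, c_n(0) = 1, and c_n is symmetric:
      c_n(x) = c_n(ns - x) (reverse every coordinate).
   2. From (1 - X) B_s^(n+1) = (1 - X^(s+1)) B_s^n we get the recurrence
      c_(n+1)(x) - c_(n+1)(x-1) = c_n(x) - c_n(x-s-1).
   3. By induction on n, using 2 and the symmetry, c_n is unimodal: it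
      increases weakly up to the middle ns/2, strictly (on [0, ns/2]) as soon
      as n >= 2.  Hence the first difference D_n(x) = c_n(x) - c_n(x-1) is
      positive on [0, ns/2], zero exactly at x = (ns+1)/2, and negative on
      [ns/2 + 1, ns + 1].
   4. By 2, with r = s+1, every entry i >= 1 of \hat g^{r,d}_k is the first
      difference D_(d+1)(ir - k); the three parts of the theorem are then the
      sign statements of 3 evaluated at the relevant entries. *)

Definition geomp (s : nat) : {poly int} := \sum_(j < s.+1) 'X^j.

(* C(s, n, x) cast to an integer, so that differences can be formed. *)
Definition ccoef (s n : nat) (x : int) : int := (Ccount s n x)%:Z.

Lemma ccoef_sum s n x :
  ccoef s n x =
  \sum_(f : {ffun 'I_n -> 'I_s.+1}) ((\sum_(l < n) (f l : nat))%N%:Z == x)%:R.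
Proof.
rewrite /ccoef /Ccount -sum1_card big_mkcond /= -natz natr_sum.
by apply: eq_bigr => f _; rewrite inE; case: ifP.
Qed.

Lemma ccoef_coef s n (m : nat) : ccoef s n m%:Z = (geomp s ^+ n)`_m.
Proof.
rewrite ccoef_sum /geomp.
have -> : (\sum_(j < s.+1) 'X^j) ^+ n =
          \prod_(i < n) \sum_(j < s.+1) ('X^j : {poly int})
  by rewrite prodr_const card_ord.
rewrite bigA_distr_bigA /= coef_sum; apply: eq_bigr => f _.
by rewrite prodrXr coefXn eqz_nat eq_sym.
Qed.

Lemma ccoef_neg s n x : x < 0 -> ccoef s n x = 0.
Proof.
move=> x_lt0; rewrite ccoef_sum big1 // => f _.
by case: eqP => // sum_f; move: x_lt0; rewrite -sum_f.
Qed.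

Lemma ccoef_shift s n (m j : nat) :
  ccoef s n (m%:Z - j%:Z) = ('X^j * geomp s ^+ n)`_m.
Proof.
rewrite coefXnM; case: ltnP => [lt_mj | le_jm].
  by rewrite ccoef_neg //; lia.
by rewrite -ccoef_coef; congr ccoef; lia.
Qed.

(* Only the zero vector has sum 0. *)
Lemma ccoef0 s n : ccoef s n 0 = 1.
Proof.
rewrite (ccoef_coef s n 0) -horner_coef0 horner_exp /geomp horner_sum.
rewrite big_ord_recl /= hornerXn expr0n /= big1 ?addr0 ?expr1n // => i _.
by rewrite hornerXn expr0n.
Qed.

Definition revf s n (f : {ffun 'I_n -> 'I_s.+1}) : {ffun 'I_n -> 'I_s.+1} :=
  [ffun l => rev_ord (f l)].

Lemma revfK s n : involutive (@revf s n).
Proof. by move=> f; apply/ffunP => l; rewrite !ffunE rev_ordK. Qed.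

Lemma revf_sum s n f :
  (\sum_(l < n) (@revf s n f l : nat))%N%:Z =
  (n * s)%N%:Z - (\sum_(l < n) (f l : nat))%N%:Z.
Proof.
have sum_n_s :
    (\sum_(l < n) (@revf s n f l : nat) + \sum_(l < n) (f l : nat) = n * s)%N.
  rewrite -big_split /= (eq_bigr (fun _ => s)) ?sum_nat_const ?card_ord //.
  by move=> l _; rewrite ffunE /=; have := ltn_ord (f l); lia.
by rewrite -sum_n_s PoszD addrK.
Qed.

Lemma ccoef_sym s n x : ccoef s n x = ccoef s n ((n * s)%N%:Z - x).
Proof.
rewrite !ccoef_sum (reindex_inj (can_inj (@revfK s n))).
apply: eq_bigr => f _; rewrite revf_sum; congr (_%:R).
by apply/eqP/eqP; lia.
Qed.

Lemma geomp_mul s : (1 - 'X) * geomp s = 1 - 'X^(s.+1).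
Proof.
have := subrXX (1 : {poly int}) 'X s.+1; rewrite expr1n => ->; congr (_ * _).
by apply: eq_bigr => i _; rewrite expr1n mul1r.
Qed.

(* Recurrence coming from (1 - X) B_s^(n+1) = (1 - X^(s+1)) B_s^n. *)
Lemma ccoef_diff s n x :
  ccoef s n.+1 x - ccoef s n.+1 (x - 1) = ccoef s n x - ccoef s n (x - s.+1%:Z).
Proof.
have [x_lt0 | x_ge0] := ltP x 0.
  by rewrite !ccoef_neg //; lia.
have [m ->] : exists m : nat, x = m%:Z by exists `|x|%N; lia.
have geom_rec : (1 - 'X) * geomp s ^+ n.+1 = (1 - 'X^(s.+1)) * geomp s ^+ n
  by rewrite exprS mulrA geomp_mul.
have := congr1 (fun p : {poly int} => p`_m) geom_rec.
rewrite !mulrBl !mul1r !coefB -!ccoef_coef.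
by rewrite (ccoef_shift s n.+1 m 1) (ccoef_shift s n m s.+1) expr1.
Qed.

Definition weak_unimodal (s n : nat) : Prop :=
  forall y : int, 2 * y <= (n * s)%N%:Z + 1 -> ccoef s n (y - 1) <= ccoef s n y.

Definition strict_unimodal (s n : nat) : Prop :=
  (2 <= n)%N -> forall y : int, 0 <= y -> 2 * y <= (n * s)%N%:Z ->
  ccoef s n (y - 1) < ccoef s n y.

Section Unimodality.

Variables s n : nat.
Hypothesis weak_n : weak_unimodal s n.

Lemma ccoef_mono a b :
  a <= b -> 2 * b <= (n * s)%N%:Z + 1 -> ccoef s n a <= ccoef s n b.
Proof.
move=> le_ab hb.
have [t ->] : exists t : nat, a = b - t%:Z by exists `|b - a|%N; lia.
elim: t b hb {le_ab} => [|t IHt] b hb; first by rewrite subr0.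
apply: (le_trans _ (weak_n _ hb)); have -> : b - t.+1%:Z = (b - 1) - t%:Z by lia.
by apply: IHt; lia.
Qed.

(* Every admissible sum is attained: c_n(y) >= c_n(0) = 1 on [0, ns]. *)
Lemma ccoef_ge1 y : 0 <= y -> y <= (n * s)%N%:Z -> 1 <= ccoef s n y.
Proof.
move=> y_ge0 y_le; rewrite -(ccoef0 s n).
have [low | high] := leP (2 * y) ((n * s)%N%:Z + 1).
  exact: ccoef_mono.
by rewrite [ccoef s n y]ccoef_sym; apply: ccoef_mono; lia.
Qed.

Lemma ccoef_shift_le y :
  2 * y <= (n * s)%N%:Z + s%:Z + 1 -> ccoef s n (y - s.+1%:Z) <= ccoef s n y.
Proof.
move=> hy; have [low | high] := leP (2 * y) ((n * s)%N%:Z + 1).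
  by apply: ccoef_mono; lia.
by rewrite [ccoef s n y]ccoef_sym; apply: ccoef_mono; lia.
Qed.

(* By the recurrence, the step at n + 1 is the shift comparison at n. *)
Lemma weak_unimodal_succ : weak_unimodal s n.+1.
Proof.
move=> y hy; rewrite -subr_ge0 ccoef_diff subr_ge0.
by apply: ccoef_shift_le; move: hy; rewrite mulSn PoszD; lia.
Qed.

Hypothesis strict_n : strict_unimodal s n.

Lemma ccoef_smono a b : (2 <= n)%N -> a < b -> 0 <= b ->
  2 * b <= (n * s)%N%:Z -> ccoef s n a < ccoef s n b.
Proof.
move=> n_ge2 lt_ab b_ge0 hb.
by apply: le_lt_trans (strict_n n_ge2 _ b_ge0 hb); apply: ccoef_mono; lia.
Qed.

(* Same reduction as in the weak case; when y < s + 1 the shifted term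
   vanishes and c_n(y) >= 1 suffices, otherwise n >= 2 and strictness at n
   applies (directly or through the symmetry). *)
Lemma strict_unimodal_succ : strict_unimodal s n.+1.
Proof.
move=> n_ge1 y y_ge0 hy; rewrite -subr_gt0 ccoef_diff subr_gt0.
have s_le_ns : (s <= n * s)%N by rewrite leq_pmull.
rewrite mulSn PoszD in hy.
have [far | near] := ltP (y - s.+1%:Z) 0.
  have : 1 <= ccoef s n y by apply: ccoef_ge1 => //; lia.
  by rewrite (ccoef_neg _ _ _ far); lia.
have n_ge2 : (2 <= n)%N.
  rewrite ltnNge; apply/negP => n_le1; have n1 : n = 1%N by lia.
  by move: hy near; rewrite n1 mul1n; lia.
have [low | high] := leP (2 * y) (n * s)%N%:Z.
  by apply: ccoef_smono => //; lia.
by rewrite [ccoef s n y]ccoef_sym; apply: ccoef_smono => //; lia.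
Qed.

End Unimodality.

Lemma ccoef_unimodal s n : weak_unimodal s n /\ strict_unimodal s n.
Proof.
elim: n => [|n [weak_n strict_n]].
  split=> // y hy; have [y_lt0 | y_ge0] := ltP y 0.
    by rewrite !ccoef_neg //; lia.
  by rewrite ccoef_neg //; lia.
by split; [apply: weak_unimodal_succ | apply: strict_unimodal_succ].
Qed.

Definition dcoef (s n : nat) (x : int) : int := ccoef s n x - ccoef s n (x - 1).

(* Symmetry of c_n makes D_n antisymmetric around (ns + 1)/2. *)
Lemma dcoef_antisym s n x : dcoef s n x = - dcoef s n ((n * s)%N%:Z + 1 - x).
Proof.
rewrite /dcoef opprB [ccoef s n x]ccoef_sym [ccoef s n (x - 1)]ccoef_sym.
by congr (ccoef _ _ _ - ccoef _ _ _); lia.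
Qed.

Lemma dcoef_ge0 s n x : 2 * x <= (n * s)%N%:Z + 1 -> 0 <= dcoef s n x.
Proof. by move=> hx; rewrite subr_ge0; apply: (ccoef_unimodal s n).1. Qed.

Lemma dcoef_gt0 s n x :
  (2 <= n)%N -> 0 <= x -> 2 * x <= (n * s)%N%:Z -> 0 < dcoef s n x.
Proof. by move=> n_ge2 x_ge0 hx; rewrite subr_gt0; apply: (ccoef_unimodal s n).2. Qed.

Lemma dcoef_mid s n x : 2 * x = (n * s)%N%:Z + 1 -> dcoef s n x = 0.
Proof.
move=> mid; have := dcoef_antisym s n x.
have -> : (n * s)%N%:Z + 1 - x = x by lia.
lia.
Qed.

Lemma dcoef_eq0 s n x : (2 <= n)%N -> 0 <= x -> 2 * x <= (n * s)%N%:Z + 1 ->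
  dcoef s n x = 0 <-> 2 * x = (n * s)%N%:Z + 1.
Proof.
move=> n_ge2 x_ge0 hx; split=> [dx0 | /dcoef_mid //].
apply/eqP; rewrite eq_le hx /=; apply/negP => lt_x.
have : 0 < dcoef s n x by apply: dcoef_gt0 => //; lia.
by rewrite dx0 ltxx.
Qed.

Lemma dcoef_lt0 s n x : (2 <= n)%N -> (n * s)%N%:Z + 2 <= 2 * x ->
  x <= (n * s)%N%:Z + 1 -> dcoef s n x < 0.
Proof.
move=> n_ge2 hx1 hx2; rewrite dcoef_antisym oppr_lt0.
by apply: dcoef_gt0 => //; lia.
Qed.

Lemma ghat_entry_succ s d k i :
  ghat_entry s.+1 d k i.+1 = dcoef s d.+1 ((i.+1 * s.+1)%N%:Z - k%:Z).
Proof.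
rewrite /dcoef ccoef_diff /ghat_entry /ccoef /=.
by congr (_ - (Ccount _ _ _)%:Z); lia.
Qed.

Lemma last_map_iota (T : Type) (x0 : T) (f : nat -> T) m :
  last x0 [seq f i | i <- iota 0 m.+1] = f m.
Proof.
rewrite -nth_last size_map size_iota (nth_map 0%N) ?size_iota //.
by rewrite nth_iota.
Qed.

Lemma lastv_gvec s d k :
  (k < s.+1)%N -> lastv (gvec s.+1 d k) = ghat_entry s.+1 d k d./2.
Proof.
move=> hk; rewrite /lastv /gvec /ghat hk -map_take take_iota.
by rewrite (_ : minn _ _ = d./2.+1) ?last_map_iota //; lia.
Qed.

Lemma lastv_ghat s d k : (k < s.+1)%N ->
  lastv (ghat s.+1 d k) = dcoef s d.+1 ((d./2.+1 * s.+1)%N%:Z - k%:Z).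
Proof.
by move=> hk; rewrite /lastv /ghat hk addn2 last_map_iota ghat_entry_succ.
Qed.

(* Part (i), non-negativity (for every k): the entries of g^{r,d}_k are a
   value of c_d and values of D_(d+1) on its left half, where D_(d+1) >= 0. *)
Lemma gvec_ge0 s d k : (d <= s.+1)%N -> all (fun x : int => 0 <= x) (gvec s.+1 d k).
Proof.
move=> le_d_r; rewrite /gvec /ghat; case: ifP => hk; last first.
  by apply/allP => x /mem_take; rewrite mem_nseq => /andP [_ /eqP ->].
rewrite -map_take take_iota; apply/allP => _ /mapP [[|i] hi ->] //.
rewrite ghat_entry_succ; apply: dcoef_ge0.
move: hi; rewrite mem_iota => /andP [_ hi].
have := odd_double_half d; nia.
Qed.

(* For d = 1 it is
   c_1(-k); otherwise it is D_(d+1) at a point of the left half, which vanishes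
   only at the centre, and that happens exactly when d = r is even and k = 0. *)
Lemma lastv_gvec_eq0 s d k : (1 <= d)%N -> (d <= s.+1)%N -> (k < s.+1)%N ->
  lastv (gvec s.+1 d k) = 0 <->
  (~~ odd d) && (d == s.+1) && (k == 0%N) || (d == 1%N) && (0 < k)%N.
Proof.
move=> d_ge1 le_d_r hk; rewrite lastv_gvec //.
have d_split := odd_double_half d.
case: (d./2) d_split => [|m] d_split.
  have -> : d = 1%N by move: d_split; case: (odd d) => /=; lia.
  rewrite /= -/(ccoef s 1 (- k%:Z)).
  case: k hk => [|k] hk; first by rewrite oppr0 ccoef0.
  by rewrite ccoef_neg.
rewrite ghat_entry_succ dcoef_eq0; [|lia|lia|nia].
have -> : (d == 1%N) = false by apply/eqP; lia.
rewrite orbF; split => [mid | /andP [/andP [even_d /eqP d_r] /eqP k0]].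
  move: d_split mid; case: (odd d) => /= d_split mid; first by exfalso; nia.
  by apply/andP; split; apply/eqP; nia.
by move: d_split; rewrite (negbTE even_d) k0 d_r /=; nia.
Qed.

(* Part (ii): for odd d = 2m + 1 the last entry of \hat g^{r,d}_k is
   D_(d+1) at x = (m+1) r - k, and 2x - (d+1)(r-1) = 2(m + 1 - k). *)
Lemma lastv_ghat_odd s d k : odd d -> (d <= s.+1)%N -> (k < s.+1)%N ->
  ((d <= 2 * k)%N -> 0 < lastv (ghat s.+1 d k)) /\
  ((2 * k < d)%N -> lastv (ghat s.+1 d k) < 0).
Proof.
move=> odd_d le_d_r hk; rewrite lastv_ghat //.
have := odd_double_half d; rewrite odd_d.
split=> hkd; [apply: dcoef_gt0 | apply: dcoef_lt0]; nia.
Qed.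

(* Part (iii), strict signs: for even d = 2m the last entry is D_(d+1) at
   x = (m+1) r - k, and 2x - (d+1)(r-1) = d + r + 1 - 2k. *)
Lemma lastv_ghat_even s d k : ~~ odd d -> (0 < d)%N -> (d <= s.+1)%N -> (k < s.+1)%N ->
  ((d + s.+1 < 2 * k)%N -> 0 < lastv (ghat s.+1 d k)) /\
  ((2 * k < d + s.+1)%N -> lastv (ghat s.+1 d k) < 0).
Proof.
move=> even_d d_gt0 le_d_r hk; rewrite lastv_ghat //.
have := odd_double_half d; rewrite (negbTE even_d).
split=> hkd; [apply: dcoef_gt0 | apply: dcoef_lt0]; nia.
Qed.

(* Part (iii), the zero: for d and r even and k = (d + r)/2 the point x sits
   exactly at the centre (ns + 1)/2; if k >= r the vector is zero anyway. *)
Lemma lastv_ghat_middle s d : ~~ odd d -> ~~ odd s.+1 ->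
  lastv (ghat s.+1 d ((d + s.+1)./2)) = 0.
Proof.
move=> even_d even_r.
have half_k : ((d + s.+1)./2).*2 = (d + s.+1)%N
  by rewrite even_halfK // oddD (negbTE even_d) (negbTE even_r).
have [hk | hk] := ltnP ((d + s.+1)./2) s.+1.
  rewrite lastv_ghat //; apply: dcoef_mid.
  by have := odd_double_half d; rewrite (negbTE even_d); nia.
by rewrite /lastv /ghat ltnNge hk /=; elim: (d./2 + 2)%N.
Qed.

Theorem mainTheorem7 (r d k : nat) (hd1 : (1 <= d)%N) (hdr : (d <= r)%N) (hk : (k < r)%N) :
  (* (i) *)
  ((all (fun x : int => 0 <= x) (gvec r d k)) /\
   (lastv (gvec r d k) = 0 <->
      ((~~ odd d) && (d == r) && (k == 0%N)) || ((d == 1%N) && (0 < k)%N)))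
  /\
  (* (ii) *)
  (odd d ->
     ((d <= 2 * k)%N -> 0 < lastv (ghat r d k)) /\
     ((2 * k < d)%N -> lastv (ghat r d k) < 0))
  /\
  (* (iii) *)
  (~~ odd d ->
     ((d + r < 2 * k)%N -> 0 < lastv (ghat r d k)) /\
     ((2 * k < d + r)%N -> lastv (ghat r d k) < 0) /\
     (~~ odd r -> lastv (ghat r d ((d + r)./2)) = 0)).
Proof.
case: r hdr hk => [|s] hdr hk; first by [].
split; [split | split].
- exact: gvec_ge0.
- exact: lastv_gvec_eq0.
- by move=> odd_d; apply: lastv_ghat_odd.
- move=> even_d; have [pos neg] := lastv_ghat_even _ _ _ even_d hd1 hdr hk.
  by split; [exact: pos | split; [exact: neg | exact: lastv_ghat_middle]].
Qed.
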